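(* Let $\gamma>0$, $C\ge1$, and let the rows $q_1,q_2,\ldots$ (row vectors in $\mathbb{R}^N$) of an $m\times N$ real matrix $Q$ arrive online. Suppose there is an online algorithm that outputs a sequence of positive semidefinite $N\times N$ matrices $X_0,X_1,X_2,\ldots$ which, at each time step $t\ge1$, either reports that there is no positive semidefinite matrix $X$ with $\mathrm{tr}(X)\le\gamma^2N$ and $X\succeq q_i^Tq_i$ for all $i\in[t]$, or else outputs a new positive semidefinite matrix $X_t$ such that $X_t\succeq X_{t-1}$, $X_t\succeq q_t^Tq_t$, and $\mathrm{tr}(X_t)\le C^2\gamma^2N$. Then there exists an online factorization algorithm that solves the $(\gamma,C)$-bounded online average factorization problem for $Q$.
   Context: $A\succeq B$ means $A-B$ is positive semidefinite. For a matrix, $\|L\|_{2\to\infty}$ is the maximum $\ell_2$ norm of a row, $\|R\|_{1\to2}$ the maximum $\ell_2$ norm of a column, $\|R\|_F$ the Frobenius norm, and $\gamma_2(A)=\min\{\|L\|_{2\to\infty}\|R\|_{1\to2}:LR=A\}$; $Q_t$ is the first $t$ rows of $Q$. The $(\gamma,C)$-bounded online average factorization problem: the algorithm chooses an initial (possibly empty) matrix $R_0$ with $N$ columns; at each time $t\ge1$ it receives $q_t$ and must either (i) form $R_t$ by appending rows to $R_{t-1}$ and output a row $\ell_t$ with $\ell_tR_t=q_t$, such that $\|R_t\|_F\le\sqrt N$ and $\|L_t\|_{2\to\infty}\le C\gamma$ (where $L_t$ has zero-padded rows $\ell_1,\ldots,\ell_t$), or (ii) (correctly) assert that $\gamma_2(Q_t)>\gamma$.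 *)

From HB Require Import structures.
From mathcomp Require Import all_boot all_order all_algebra.
Set Implicit Arguments. Unset Strict Implicit. Unset Printing Implicit Defensive.
Import Order.TTheory GRing.Theory Num.Theory.
Local Open Scope ring_scope.

Section Defs.
Variable R : rcfType.

Definition norm2inf m n (L : 'M[R]_(m, n)) : R :=
  \big[Num.max/0]_(i < m) Num.sqrt (\sum_(j < n) L i j ^+ 2).
Definition norm12 m n (M : 'M[R]_(m, n)) : R :=
  \big[Num.max/0]_(j < n) Num.sqrt (\sum_(i < m) M i j ^+ 2).
Definition frob m n (M : 'M[R]_(m, n)) : R :=
  Num.sqrt (\sum_(i < m) \sum_(j < n) M i j ^+ 2).

(* gamma_2(A) > g, where gamma_2(A) = min { ||L||_{2->oo} ||R||_{1->2} : L R = A }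
   (inner dimension k arbitrary): every factorization has value > g. *)
Definition gamma2_gt m n (A : 'M[R]_(m, n)) (g : R) : Prop :=
  forall (k : nat) (L : 'M[R]_(m, k)) (M : 'M[R]_(k, n)),
    L *m M = A -> g < norm2inf L * norm12 M.

Definition mx_of_rows N (s : seq 'rV[R]_N) : 'M[R]_(size s, N) :=
  \matrix_(i < size s, j < N) (nth 0 s i) 0 j.

Definition seqnorm (l : seq R) : R := Num.sqrt (\sum_(x <- l) x ^+ 2).
(* ||L||_{2->oo} of the (zero-padded) matrix with rows ls *)
Definition rows_norm2inf (ls : seq (seq R)) : R :=
  \big[Num.max/0]_(l <- ls) seqnorm l.

Definition psdmx N (A : 'M[R]_N) : Prop :=
  A^T = A /\ forall x : 'rV[R]_N, 0 <= (x *m A *m x^T) 0 0.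
Definition psd_ge N (A B : 'M[R]_N) : Prop := psdmx (A - B).

(* ---------- online PSD algorithm ----------
   X0 = initial output; step p = output after receiving the prefix p
   (p = q_1 ... q_t): None = "report infeasibility", Some X_t otherwise.
   The output depends only on the prefix seen so far (online). *)
Definition psd_alg N := ('M[R]_N * (seq 'rV[R]_N -> option 'M[R]_N))%type.

Fixpoint psd_run_aux N (step : seq 'rV[R]_N -> option 'M[R]_N)
    (done rest : seq 'rV[R]_N) (st : option 'M[R]_N) : option 'M[R]_N :=
  match rest with
  | [::] => st
  | q :: rest' =>
      let done' := rcons done q in
      psd_run_aux step done' rest'
        (match st with Some _ => step done' | None => None end)
  end.
Definition psd_run N (A : psd_alg N) (p : seq 'rV[R]_N) : option 'M[R]_N :=
  psd_run_aux A.2 [::] p (Some A.1).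

Definition psd_alg_correct N (gamma C : R) (A : psd_alg N) : Prop :=
  psdmx A.1 /\
  forall (p : seq 'rV[R]_N) (q : 'rV[R]_N) (Xp : 'M[R]_N),
    psd_run A p = Some Xp ->
    match A.2 (rcons p q) with
    | None => ~ (exists X : 'M[R]_N, psdmx X /\ \tr X <= gamma ^+ 2 * N%:R /\
                   forall qi, qi \in rcons p q -> psd_ge X (qi^T *m qi))
    | Some Xt => psdmx Xt /\ psd_ge Xt Xp /\ psd_ge Xt (q^T *m q) /\
                 \tr Xt <= C ^+ 2 * gamma ^+ 2 * N%:R
    end.

(* ---------- online factorization algorithm ----------
   F.1 = R_0 (as its list of rows); F.2 p, for the prefix p = q_1..q_t, is
   None = "assert gamma_2(Q_t) > gamma", or Some (rows appended to R_{t-1}, l_t)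
   where l_t is the list of coordinates of the row l_t (length = #rows of R_t). *)
Definition fact_alg N :=
  (seq 'rV[R]_N * (seq 'rV[R]_N -> option (seq 'rV[R]_N * seq R)))%type.

Fixpoint fact_run_aux N (step : seq 'rV[R]_N -> option (seq 'rV[R]_N * seq R))
    (done rest : seq 'rV[R]_N) (st : option (seq 'rV[R]_N * seq (seq R)))
    : option (seq 'rV[R]_N * seq (seq R)) :=
  match rest with
  | [::] => st
  | q :: rest' =>
      let done' := rcons done q in
      fact_run_aux step done' rest'
        (match st with
         | Some (Rs, Ls) =>
             match step done' with
             | Some (nw, l) => Some (Rs ++ nw, rcons Ls l)
             | None => None
             end
         | None => None
         end)
  end.
Definition fact_run N (F : fact_alg N) (p : seq 'rV[R]_N)
    : option (seq 'rV[R]_N * seq (seq R)) :=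
  fact_run_aux F.2 [::] p (Some (F.1, [::])).

Definition solves_online_avg_fact N (gamma C : R) (F : fact_alg N) : Prop :=
  forall (p : seq 'rV[R]_N) (q : 'rV[R]_N) Rs Ls,
    fact_run F p = Some (Rs, Ls) ->
    match F.2 (rcons p q) with
    | None => gamma2_gt (mx_of_rows (rcons p q)) gamma
    | Some (nw, l) =>
        let Rt := Rs ++ nw in
        size l = size Rt /\
        (\row_(i < size Rt) nth 0 l i) *m mx_of_rows Rt = q /\
        frob (mx_of_rows Rt) <= Num.sqrt N%:R /\
        rows_norm2inf (rcons Ls l) <= C * gamma
    end.

End Defs.

From HB Require Import structures.
From mathcomp Require Import all_boot all_order all_algebra.
From mathcomp Require Import ring lra.
Set Implicit Arguments. Unset Strict Implicit. Unset Printing Implicit Defensive.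
Import Order.TTheory GRing.Theory Num.Theory.
Local Open Scope ring_scope.

(* Put S := (C gamma)^2 and keep the rows of R_t a Gram decomposition of X_t / S.
   Since X_t >= X_{t-1}, the increment (X_t - X_{t-1}) / S is positive semidefinite,
   hence the Gram matrix of finitely many rows (pivoted Cholesky), which are
   appended to R_{t-1}.  Then ||R_t||_F^2 = tr X_t / S <= N, and S R_t^T R_t = X_t
   >= q_t^T q_t puts q_t in the row space of R_t, with the coefficient row
   l_t = q_t (R_t^T R_t)^+ R_t^T of squared norm at most S.  Conversely, any
   factorization Q_t = L M with ||L||_{2->oo} ||M||_{1->2} <= gamma yields the
   feasible point ||L||_{2->oo}^2 M^T M, so a report of infeasibility certifies
   gamma_2(Q_t) > gamma. *)

Section QuadraticForms.
Variable R : rcfType.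

Definition bform n (x : 'rV[R]_n) (A : 'M[R]_n) (y : 'rV[R]_n) : R :=
  (x *m A *m y^T) 0 0.

Definition dotr n (u v : 'rV[R]_n) : R := (u *m v^T) 0 0.

Lemma bformDl n (x y z : 'rV[R]_n) A : bform (x + y) A z = bform x A z + bform y A z.
Proof. by rewrite /bform !mulmxDl mxE. Qed.

Lemma bformDr n (x y z : 'rV[R]_n) A : bform x A (y + z) = bform x A y + bform x A z.
Proof. by rewrite /bform linearD /= mulmxDr mxE. Qed.

Lemma bformZl n (x y : 'rV[R]_n) A c : bform (c *: x) A y = c * bform x A y.
Proof. by rewrite /bform -!scalemxAl mxE. Qed.

Lemma bformZr n (x y : 'rV[R]_n) A c : bform x A (c *: y) = c * bform x A y.
Proof. by rewrite /bform linearZ /= -scalemxAr mxE. Qed.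

Lemma bformBm n (x y : 'rV[R]_n) A B : bform x (A - B) y = bform x A y - bform x B y.
Proof. by rewrite /bform mulmxBr mulmxBl !mxE. Qed.

Lemma bformZm n (x y : 'rV[R]_n) A c : bform x (c *: A) y = c * bform x A y.
Proof. by rewrite /bform -scalemxAr -scalemxAl mxE. Qed.

Lemma bformC n (x y : 'rV[R]_n) A : A^T = A -> bform x A y = bform y A x.
Proof.
move=> symA; have tr_xAy : (x *m A *m y^T)^T = y *m A *m x^T.
  by rewrite !trmx_mul trmxK symA mulmxA.
by rewrite /bform -tr_xAy [in RHS]mxE.
Qed.

Lemma bform_delta n (A : 'M[R]_n) i j :
  bform (delta_mx 0 i) A (delta_mx 0 j) = A i j.
Proof. by rewrite /bform -rowE trmx_delta -colE !mxE. Qed.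

Lemma bform1 n (x y : 'rV[R]_n) : bform x 1%:M y = dotr x y.
Proof. by rewrite /bform mulmx1. Qed.

Lemma dotrC n (u v : 'rV[R]_n) : dotr u v = dotr v u.
Proof. by rewrite /dotr -[u *m v^T]trmxK trmx_mul trmxK mxE. Qed.

Lemma dotrr n (u : 'rV[R]_n) : dotr u u = \sum_j u 0 j ^+ 2.
Proof. by rewrite /dotr mxE; apply: eq_bigr => j _; rewrite mxE expr2. Qed.

Lemma dotrr_ge0 n (u : 'rV[R]_n) : 0 <= dotr u u.
Proof. by rewrite dotrr sumr_ge0 // => j _; rewrite sqr_ge0. Qed.

Lemma bform_rank1 n (x r : 'rV[R]_n) : bform x (r^T *m r) x = dotr x r ^+ 2.
Proof.
rewrite /bform !mulmxA -(mulmxA (x *m r^T)) mxE big_ord1 expr2.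
by rewrite -/(dotr x r) -/(dotr r x) dotrC.
Qed.

Lemma bform_gram_mx m n (x : 'rV[R]_n) (M : 'M[R]_(m, n)) :
  bform x (M^T *m M) x = dotr (x *m M^T) (x *m M^T).
Proof. by rewrite /bform /dotr trmx_mul trmxK !mulmxA. Qed.

Lemma nonneg_quadratic_discr (a b c : R) : 0 <= c ->
  (forall t, 0 <= a + 2 * t * b + t ^+ 2 * c) -> b ^+ 2 <= a * c.
Proof.
move=> c_ge0 nonneg; have [c_gt0|c_le0] := ltrP 0 c.
  have := nonneg (- (b / c)).
  have -> : a + 2 * - (b / c) * b + (- (b / c)) ^+ 2 * c = a - b ^+ 2 / c.
    by field; rewrite gt_eqF.
  by rewrite subr_ge0 ler_pdivrMr.
have c0 : c = 0 by apply/eqP; rewrite eq_le c_le0 c_ge0.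
rewrite c0 in nonneg *.
have [-> | b_neq0] := eqVneq b 0; first by rewrite expr0n mulr0.
have := nonneg (- ((a + 1) / (2 * b))).
have -> : a + 2 * - ((a + 1) / (2 * b)) * b + (- ((a + 1) / (2 * b))) ^+ 2 * 0 = -1.
  by field.
by rewrite lerNr oppr0 ler10.
Qed.

Lemma psdmx_bform n (A : 'M[R]_n) x : psdmx A -> 0 <= bform x A x.
Proof. by case=> _; apply. Qed.

Lemma psdmx_cauchy_schwarz n (A : 'M[R]_n) x y : psdmx A ->
  bform x A y ^+ 2 <= bform x A x * bform y A y.
Proof.
move=> psdA; apply: nonneg_quadratic_discr; first exact: psdmx_bform.
move=> t; have := psdmx_bform (x + t *: y) psdA.
rewrite !bformDl !bformDr !bformZl !bformZr (bformC y x psdA.1).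
by congr (_ <= _); ring.
Qed.

Lemma psdmxZ n (A : 'M[R]_n) c : 0 <= c -> psdmx A -> psdmx (c *: A).
Proof.
move=> c_ge0 [symA posA]; split; first by rewrite linearZ /= symA.
by move=> x; rewrite -/(bform _ _ _) bformZm mulr_ge0 // posA.
Qed.

Lemma psdmx_gram_mx m n (M : 'M[R]_(m, n)) : psdmx (M^T *m M).
Proof.
split; first by rewrite trmx_mul trmxK.
by move=> x; rewrite -/(bform _ _ _) bform_gram_mx dotrr_ge0.
Qed.

Lemma dotr_cauchy_schwarz n (u v : 'rV[R]_n) : dotr u v ^+ 2 <= dotr u u * dotr v v.
Proof.
have := psdmx_cauchy_schwarz u v (psdmx_gram_mx (1%:M : 'M[R]_n)).
by rewrite trmx1 mulmx1 !bform1.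
Qed.

Lemma psdmx_diag_ge0 n (A : 'M[R]_n) i : psdmx A -> 0 <= A i i.
Proof. by move=> psdA; rewrite -bform_delta psdmx_bform. Qed.

Lemma psdmx_entry_sqr n (A : 'M[R]_n) i j : psdmx A -> A i j ^+ 2 <= A i i * A j j.
Proof.
by move/(psdmx_cauchy_schwarz (delta_mx 0 i) (delta_mx 0 j)); rewrite !bform_delta.
Qed.

Lemma psdmx_diag0_entry n (A : 'M[R]_n) i j : psdmx A -> A j j = 0 -> A i j = 0.
Proof.
move=> psdA Ajj0; apply/eqP; rewrite -sqrf_eq0 eq_le sqr_ge0 andbT.
by rewrite -(mulr0 (A i i)) -Ajj0 psdmx_entry_sqr.
Qed.

Lemma psdmx_diag0_eq0 n (A : 'M[R]_n) : psdmx A -> (forall j, A j j = 0) -> A = 0.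
Proof.
move=> psdA diag0; apply/matrixP => i j.
by rewrite mxE (psdmx_diag0_entry _ psdA (diag0 j)).
Qed.

End QuadraticForms.

Section GramDecomposition.
Variable R : rcfType.

Definition gram n (s : seq 'rV[R]_n) : 'M[R]_n := \sum_(r <- s) r^T *m r.

Lemma gram_cat n (s1 s2 : seq 'rV[R]_n) : gram (s1 ++ s2) = gram s1 + gram s2.
Proof. exact: big_cat. Qed.

Definition pivot_row n (A : 'M[R]_n) i : 'rV[R]_n := (Num.sqrt (A i i))^-1 *: row i A.

Definition diag_support n (A : 'M[R]_n) : {set 'I_n} := [set j | A j j != 0].

Fixpoint pivot_rows k n (A : 'M[R]_n) : seq 'rV[R]_n :=
  if k is k'.+1 then
    if [pick i | A i i != 0] is Some i then
      let r := pivot_row A i in r :: pivot_rows k' (A - r^T *m r)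
    else [::]
  else [::].

Section Pivot.
Variables (n : nat) (A : 'M[R]_n) (i : 'I_n).
Hypotheses (psdA : psdmx A) (Aii_gt0 : 0 < A i i).
Let r := pivot_row A i.

Lemma sub_pivotE j l : (A - r^T *m r) j l = A j l - A i j * A i l / A i i.
Proof.
rewrite !mxE big_ord1 !mxE -[in RHS](sqr_sqrtr (ltW Aii_gt0)).
by field; rewrite sqrtr_eq0 -ltNge.
Qed.

Lemma psdmx_sub_pivot : psdmx (A - r^T *m r).
Proof.
split; first by rewrite linearB /= trmx_mul trmxK psdA.1.
move=> x; rewrite -/(bform _ _ _) bformBm bform_rank1.
have -> : dotr x r = (Num.sqrt (A i i))^-1 * bform x A (delta_mx 0 i).
  by rewrite /dotr /r /pivot_row linearZ /= -scalemxAr mxE /bform tr_row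
    psdA.1 colE trmx_delta mulmxA.
have := psdmx_cauchy_schwarz x (delta_mx 0 i) psdA; rewrite bform_delta.
rewrite exprMn exprVn (sqr_sqrtr (ltW Aii_gt0)) subr_ge0 [_^-1 * _]mulrC.
by rewrite ler_pdivrMr.
Qed.

Lemma diag_support_sub_pivot : diag_support (A - r^T *m r) \proper diag_support A.
Proof.
apply/properP; split.
  apply/subsetP => j; rewrite !inE; apply: contraNN => /eqP Ajj0.
  by rewrite sub_pivotE Ajj0 (psdmx_diag0_entry _ psdA Ajj0) mul0r mul0r subr0.
exists i; first by rewrite inE gt_eqF.
by rewrite inE sub_pivotE negbK mulfK ?subrr // gt_eqF.
Qed.

End Pivot.

Lemma gram_pivot_rows k n (A : 'M[R]_n) : psdmx A -> (#|diag_support A| <= k)%N ->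
  gram (pivot_rows k A) = A.
Proof.
elim: k n A => [|k IH] n A psdA /=.
  rewrite leqn0 => /eqP/card0_eq supp0.
  rewrite /gram big_nil; apply/esym/psdmx_diag0_eq0 => // j.
  by have := supp0 j; rewrite inE => /negbFE/eqP.
move=> supp_le; case: pickP => [i Aii | diag0]; last first.
  rewrite /gram big_nil; apply/esym/psdmx_diag0_eq0 => // j.
  exact/eqP/negbFE/diag0.
have Aii_gt0 : 0 < A i i by rewrite lt_def Aii psdmx_diag_ge0.
rewrite /gram big_cons -/(gram _) IH; first by rewrite addrC subrK.
  exact: psdmx_sub_pivot.
by rewrite -ltnS (leq_trans (proper_card (diag_support_sub_pivot psdA Aii_gt0))).
Qed.

Definition psd_rows n (A : 'M[R]_n) : seq 'rV[R]_n := pivot_rows n A.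

Lemma gram_psd_rows n (A : 'M[R]_n) : psdmx A -> gram (psd_rows A) = A.
Proof.
by move=> psdA; rewrite gram_pivot_rows // (leq_trans (max_card _)) ?card_ord.
Qed.

End GramDecomposition.

Section GramCoefficients.
Variable R : rcfType.

Lemma submx_of_psd_ge_rank1 n (G : 'M[R]_n) (q : 'rV[R]_n) c :
  psd_ge (c *: G) (q^T *m q) -> (q <= G)%MS.
Proof.
move=> [_ posB]; rewrite submxE; apply/eqP/rowP => j; rewrite [RHS]mxE.
pose x := (col j (cokermx G))^T.
have xGx0 : bform x G x = 0.
  by rewrite /bform trmxK -mulmxA colE (mulmxA G) mulmx_coker mul0mx mulmx0 mxE.
have := posB x; rewrite -/(bform _ _ _) bformBm bformZm xGx0 mulr0 sub0r.
rewrite bform_rank1 oppr_ge0 => sq_le0.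
have <- : dotr x q = 0 by apply/eqP; rewrite -sqrf_eq0 eq_le sq_le0 sqr_ge0.
by rewrite dotrC /dotr /x trmxK colE [in RHS]mulmxA -colE [RHS]mxE.
Qed.

Definition gram_coef k n (M : 'M[R]_(k, n)) (q : 'rV[R]_n) : 'rV[R]_k :=
  q *m pinvmx (M^T *m M) *m M^T.

Section Dominated.
Variables (k n : nat) (M : 'M[R]_(k, n)) (q : 'rV[R]_n) (c : R).
Hypothesis dominated : psd_ge (c *: (M^T *m M)) (q^T *m q).

Lemma gram_coefK : gram_coef M q *m M = q.
Proof. by rewrite -mulmxA mulmxKpV // (submx_of_psd_ge_rank1 dominated). Qed.

Lemma gram_coef_norm : 0 <= c -> dotr (gram_coef M q) (gram_coef M q) <= c.
Proof.
move=> c_ge0; set w := q *m pinvmx (M^T *m M).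
have wG : w *m (M^T *m M) = q by rewrite mulmxKpV // (submx_of_psd_ge_rank1 dominated).
have normE : dotr (gram_coef M q) (gram_coef M q) = dotr q w.
  by rewrite /dotr /gram_coef -/w trmx_mul trmxK !mulmxA -(mulmxA w) wG.
have := dominated.2 w; rewrite -/(bform _ _ _) bformBm bformZm bform_rank1.
rewrite /bform wG -/(dotr q w) -normE.
have := dotrr_ge0 (gram_coef M q); rewrite normE (dotrC w).
set t := dotr q w; nra.
Qed.

End Dominated.

End GramCoefficients.

Section RowsMatrix.
Variable R : rcfType.

Lemma row_mx_of_rows n (s : seq 'rV[R]_n) i : row i (mx_of_rows s) = nth 0 s i.
Proof. by apply/rowP => j; rewrite !mxE. Qed.

Lemma gram_mx_of_rows n (s : seq 'rV[R]_n) : (mx_of_rows s)^T *m mx_of_rows s = gram s.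
Proof.
apply/matrixP => j l; rewrite /gram summxE mxE (big_nth 0) big_mkord.
by apply: eq_bigr => i _; rewrite !mxE big_ord1 !mxE.
Qed.

Lemma frob_mx_of_rows n (s : seq 'rV[R]_n) :
  frob (mx_of_rows s) = Num.sqrt (\tr (gram s)).
Proof.
rewrite -gram_mx_of_rows /frob /mxtrace exchange_big; congr Num.sqrt.
by apply: eq_bigr => j _; rewrite mxE; apply: eq_bigr => i _; rewrite !mxE expr2.
Qed.

Definition seq_of_row k (v : 'rV[R]_k) : seq R := [seq v 0 i | i <- enum 'I_k].

Lemma size_seq_of_row k (v : 'rV[R]_k) : size (seq_of_row v) = k.
Proof. by rewrite size_map size_enum_ord. Qed.

Lemma seq_of_rowK k (v : 'rV[R]_k) : \row_(i < k) nth 0 (seq_of_row v) i = v.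
Proof. by apply/rowP => i; rewrite mxE (nth_map i) ?size_enum_ord // nth_ord_enum. Qed.

Lemma seqnorm_seq_of_row k (v : 'rV[R]_k) :
  seqnorm (seq_of_row v) = Num.sqrt (dotr v v).
Proof. by rewrite /seqnorm big_map big_enum dotrr. Qed.

Lemma rows_norm2inf_rcons_le (ls : seq (seq R)) l c : 0 <= c ->
  rows_norm2inf ls <= c -> seqnorm l <= c -> rows_norm2inf (rcons ls l) <= c.
Proof.
move=> c_ge0 ls_le l_le; rewrite /rows_norm2inf big_seq.
apply: bigmax_le => // l'; rewrite mem_rcons inE.
case/predU1P => [-> // | l'_in]; apply: le_trans ls_le.
exact: le_bigmax_seq.
Qed.

End RowsMatrix.

Section Gamma2LowerBound.
Variable R : rcfType.

Lemma le_sqr_of_sqrt_le (x b : R) : Num.sqrt x <= b -> 0 <= x -> x <= b ^+ 2.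
Proof.
move=> le_b x_ge0; have b_ge0 := le_trans (sqrtr_ge0 x) le_b.
by rewrite -ler_sqrt ?sqrtr_sqr ?ger0_norm // exprn_ge0.
Qed.

Lemma norm2inf_ge0 m n (L : 'M[R]_(m, n)) : 0 <= norm2inf L.
Proof. exact: bigmax_ge_id. Qed.

Lemma norm12_ge0 m n (M : 'M[R]_(m, n)) : 0 <= norm12 M.
Proof. exact: bigmax_ge_id. Qed.

Lemma dotr_row_le_norm2inf m n (L : 'M[R]_(m, n)) i :
  dotr (row i L) (row i L) <= norm2inf L ^+ 2.
Proof.
rewrite dotrr; under eq_bigr do rewrite mxE.
apply: le_sqr_of_sqrt_le; last by rewrite sumr_ge0 // => j _; rewrite sqr_ge0.
exact: le_bigmax.
Qed.

Lemma trace_gram_mx_le m n (M : 'M[R]_(m, n)) : \tr (M^T *m M) <= n%:R * norm12 M ^+ 2.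
Proof.
have col_le j : (M^T *m M) j j <= norm12 M ^+ 2.
  rewrite mxE; under eq_bigr do rewrite mxE -expr2.
  apply: le_sqr_of_sqrt_le; last by rewrite sumr_ge0 // => i _; rewrite sqr_ge0.
  exact: le_bigmax.
apply: le_trans (ler_sum _ (fun j _ => col_le j)) _.
by rewrite sumr_const card_ord mulr_natl.
Qed.

Lemma psd_ge_gram_rank1 k n (M : 'M[R]_(k, n)) (l : 'rV[R]_k) a :
  dotr l l <= a -> psd_ge (a *: (M^T *m M)) ((l *m M)^T *m (l *m M)).
Proof.
move=> l_le; split; first by rewrite linearB /= linearZ /= !trmx_mul !trmxK.
move=> x; rewrite -/(bform _ _ _) bformBm bformZm bform_gram_mx bform_rank1.
set y := x *m M^T.
have -> : dotr x (l *m M) = dotr y l by rewrite /dotr /y trmx_mul mulmxA.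
have := dotr_cauchy_schwarz y l; have := dotrr_ge0 y; nra.
Qed.

Lemma factorization_psd_witness m n k (L : 'M[R]_(m, k)) (M : 'M[R]_(k, n)) :
  [/\ psdmx (norm2inf L ^+ 2 *: (M^T *m M)),
      \tr (norm2inf L ^+ 2 *: (M^T *m M)) <= (norm2inf L * norm12 M) ^+ 2 * n%:R &
      forall i, psd_ge (norm2inf L ^+ 2 *: (M^T *m M))
                       ((row i (L *m M))^T *m row i (L *m M))].
Proof.
split.
- exact: psdmxZ (sqr_ge0 _) (psdmx_gram_mx M).
- rewrite mxtraceZ exprMn -(mulrA (norm2inf L ^+ 2)).
  by apply: ler_wpM2l; rewrite ?sqr_ge0 // mulrC trace_gram_mx_le.
- by move=> i; rewrite row_mul; apply: psd_ge_gram_rank1; apply: dotr_row_le_norm2inf.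
Qed.

Lemma gamma2_gt_mx_of_rows n (s : seq 'rV[R]_n) g :
  ~ (exists X : 'M[R]_n, psdmx X /\ \tr X <= g ^+ 2 * n%:R /\
       forall q, q \in s -> psd_ge X (q^T *m q)) ->
  gamma2_gt (mx_of_rows s) g.
Proof.
move=> no_psd k L M LM; rewrite ltNge; apply/negP => LM_le; apply: no_psd.
have [psdX trX geX] := factorization_psd_witness L M.
have LM_ge0 : 0 <= norm2inf L * norm12 M by rewrite mulr_ge0 ?norm2inf_ge0 ?norm12_ge0.
exists (norm2inf L ^+ 2 *: (M^T *m M)); split => //; split.
  apply: le_trans trX _; apply: ler_wpM2r; first exact: ler0n.
  by rewrite ler_sqr ?nnegrE // (le_trans LM_ge0).
move=> q /(nthP 0) [i lt_i <-].
by have := geX (Ordinal lt_i); rewrite LM row_mx_of_rows.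
Qed.

End Gamma2LowerBound.

Section OnlineRuns.
Variables (R : rcfType) (n : nat).

Lemma psd_run_rcons (A : psd_alg R n) p q :
  psd_run A (rcons p q) = if psd_run A p is Some _ then A.2 (rcons p q) else None.
Proof.
suff run_aux done st : psd_run_aux A.2 done (rcons p q) st =
    if psd_run_aux A.2 done p st is Some _ then A.2 (rcons (done ++ p) q) else None.
  exact: run_aux.
elim: p done st => [|a p IH] done st /=; first by rewrite cats0.
by rewrite IH cat_rcons.
Qed.

Lemma fact_run_rcons (F : fact_alg R n) p q :
  fact_run F (rcons p q) =
  if fact_run F p is Some (Rs, Ls) then
    if F.2 (rcons p q) is Some (nw, l) then Some (Rs ++ nw, rcons Ls l) else None
  else None.
Proof.
suff run_aux done st : fact_run_aux F.2 done (rcons p q) st =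
    if fact_run_aux F.2 done p st is Some (Rs, Ls) then
      if F.2 (rcons (done ++ p) q) is Some (nw, l) then Some (Rs ++ nw, rcons Ls l)
      else None
    else None.
  exact: run_aux.
elim: p done st => [|a p IH] done st /=; first by rewrite cats0.
by rewrite IH cat_rcons.
Qed.

End OnlineRuns.

Section FactorizationFromPsd.
Variables (R : rcfType) (N : nat) (gamma C : R) (A : psd_alg R N).
Local Notation S := ((C * gamma) ^+ 2).

Definition new_rows (p : seq 'rV[R]_N) (q : 'rV[R]_N) : seq 'rV[R]_N :=
  match psd_run A p, A.2 (rcons p q) with
  | Some Xp, Some Xt => psd_rows (S^-1 *: (Xt - Xp))
  | _, _ => [::]
  end.

Fixpoint rows_of_rev (rp : seq 'rV[R]_N) : seq 'rV[R]_N :=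
  if rp is q :: rp' then rows_of_rev rp' ++ new_rows (rev rp') q
  else psd_rows (S^-1 *: A.1).

Definition rows_of (p : seq 'rV[R]_N) : seq 'rV[R]_N := rows_of_rev (rev p).

Lemma rows_of_rcons p q : rows_of (rcons p q) = rows_of p ++ new_rows p q.
Proof. by rewrite /rows_of rev_rcons /= revK. Qed.

Definition fact_step (p : seq 'rV[R]_N) (q : 'rV[R]_N) :
    option (seq 'rV[R]_N * seq R) :=
  if A.2 (rcons p q) is Some _ then
    Some (new_rows p q, seq_of_row (gram_coef (mx_of_rows (rows_of (rcons p q))) q))
  else None.

(* The step function is only ever queried on nonempty prefixes [rcons p q]. *)
Definition fact_of_psd : fact_alg R N :=
  (rows_of [::], fun p => if rev p is q :: rp then fact_step (rev rp) q else None).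

Lemma fact_of_psd_rcons p q : fact_of_psd.2 (rcons p q) = fact_step p q.
Proof. by rewrite /= rev_rcons revK. Qed.

Hypotheses (A_ok : psd_alg_correct gamma C A) (Cgamma_gt0 : 0 < C * gamma).

Lemma sqr_Cgamma_gt0 : 0 < S.
Proof. exact: exprn_gt0. Qed.

Lemma fact_step_spec p q Xp Xt :
  psd_run A p = Some Xp -> gram (rows_of p) = S^-1 *: Xp ->
  A.2 (rcons p q) = Some Xt -> psd_ge Xt Xp -> psd_ge Xt (q^T *m q) ->
  let Rt := rows_of (rcons p q) in
  let l := seq_of_row (gram_coef (mx_of_rows Rt) q) in
  [/\ gram Rt = S^-1 *: Xt, size l = size Rt,
      (\row_(i < size Rt) nth 0 l i) *m mx_of_rows Rt = q & seqnorm l <= C * gamma].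
Proof.
move=> run_p gram_p run_t ge_p ge_q Rt l.
have gram_t : gram Rt = S^-1 *: Xt.
  rewrite /Rt rows_of_rcons gram_cat gram_p /new_rows run_p run_t gram_psd_rows.
    by rewrite -scalerDr addrC subrK.
  by apply: psdmxZ ge_p; rewrite invr_ge0 ltW ?sqr_Cgamma_gt0.
have dominated : psd_ge (S *: ((mx_of_rows Rt)^T *m mx_of_rows Rt)) (q^T *m q).
  by rewrite gram_mx_of_rows gram_t scalerA mulfV ?gt_eqF ?sqr_Cgamma_gt0 // scale1r.
split=> //.
- exact: size_seq_of_row.
- by rewrite seq_of_rowK (gram_coefK dominated).
- rewrite seqnorm_seq_of_row -(ger0_norm (ltW Cgamma_gt0)) -sqrtr_sqr.
  by rewrite ler_sqrt ?sqr_ge0 // (gram_coef_norm dominated) ?ltW ?sqr_Cgamma_gt0.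
Qed.

Lemma fact_of_psd_run p Rs Ls : fact_run fact_of_psd p = Some (Rs, Ls) ->
  exists2 Xp, psd_run A p = Some Xp &
    [/\ Rs = rows_of p, gram Rs = S^-1 *: Xp & rows_norm2inf Ls <= C * gamma].
Proof.
elim/last_ind: p Rs Ls => [|p q IH] Rs Ls.
  rewrite /fact_run /= => -[<- <-]; exists A.1 => //; split => //.
    rewrite gram_psd_rows //; apply: psdmxZ A_ok.1.
    by rewrite invr_ge0 ltW ?sqr_Cgamma_gt0.
  by rewrite /rows_norm2inf big_nil ltW.
rewrite fact_run_rcons; case run_p: (fact_run _ p) => [[Rs0 Ls0]|] //.
have [Xp psd_p [-> gram_p Ls0_le]] := IH _ _ run_p.
rewrite fact_of_psd_rcons /fact_step; have := A_ok.2 p q Xp psd_p.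
case run_t: (A.2 (rcons p q)) => [Xt|] // [_ [ge_p [ge_q _]]] [<- <-].
have [gram_t _ _ l_le] := fact_step_spec psd_p gram_p run_t ge_p ge_q.
exists Xt; first by rewrite psd_run_rcons psd_p run_t.
split; [by rewrite rows_of_rcons | by rewrite -rows_of_rcons | ].
exact: rows_norm2inf_rcons_le (ltW Cgamma_gt0) Ls0_le l_le.
Qed.

Lemma fact_of_psd_solves : solves_online_avg_fact gamma C fact_of_psd.
Proof.
move=> p q Rs Ls run_p.
have [Xp psd_p [-> gram_p Ls_le]] := fact_of_psd_run run_p.
rewrite fact_of_psd_rcons /fact_step; have := A_ok.2 p q Xp psd_p.
case run_t: (A.2 (rcons p q)) => [Xt|]; last exact: gamma2_gt_mx_of_rows.
move=> [_ [ge_p [ge_q trXt]]].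
have [gram_t size_l l_q l_le] := fact_step_spec psd_p gram_p run_t ge_p ge_q.
rewrite -rows_of_rcons; split=> //; split=> //; split.
  rewrite frob_mx_of_rows gram_t mxtraceZ ler_sqrt ?ler0n //.
  by rewrite ler_pdivrMl ?sqr_Cgamma_gt0 // exprMn.
exact: rows_norm2inf_rcons_le (ltW Cgamma_gt0) Ls_le l_le.
Qed.

End FactorizationFromPsd.

Theorem lemma4p2 (R : rcfType) (N : nat) (gamma C : R) :
  0 < gamma -> 1 <= C ->
  (exists A : psd_alg R N, psd_alg_correct gamma C A) ->
  exists F : fact_alg R N, solves_online_avg_fact gamma C F.
Proof.
move=> gamma_gt0 C_ge1 [A A_ok].
have Cgamma_gt0 : 0 < C * gamma by rewrite mulr_gt0 // (lt_le_trans ltr01 C_ge1).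
by exists (fact_of_psd gamma C A); apply: fact_of_psd_solves.
Qed.
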